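(* Consider an EF neuron as in the context, and suppose it receives no input spike after the end of its input time window, i.e. $\mathcal F_i^{in}\subseteq\{0,\ldots,T^{in}-1\}$ for all $i\in\Gamma$. Let $x=\max(V_m^-(T^{in}-1),0)$ and let $S\subseteq\{0,\ldots,T^{out}-1\}$ be the set of spike times of the LTC spike train of $x$ with the output exponent range $\{e^{out}_{min},\ldots,e^{out}_{max}\}$, where multi-spike LTC is used if the neuron is a multi-spike EF neuron and single-spike LTC is used if it is a single-spike EF neuron. Then the output spikes of the neuron within its output time window are exactly the shifted LTC spikes: $\mathcal F^{out}\cap\{T^{in}-1,\ldots,T^{in}+T^{out}-2\}=\{T^{in}-1+s : s\in S\}$.
   Context: Exponentiate-and-Fire (EF) neuron (discrete time $t\in\mathbb Z$). Fix integers $e^{in}_{min}\le e^{in}_{max}$ (input exponent range), $T^{in}=e^{in}_{max}-e^{in}_{min}+1$ (input time window $\{0,\ldots,T^{in}-1\}$), and integers $e^{out}_{min}\le e^{out}_{max}$ (output exponent range), $T^{out}=e^{out}_{max}-e^{out}_{min}+1$. The output time window is $\{T^{in}-1,\ldots,T^{in}+T^{out}-2\}$. The firing threshold is $V_{th}=2^{e^{out}_{max}}$. The neuron has a finite set $\Gamma$ of synapses with real weights $w_i$, and for each $i\in\Gamma$ a finite set $\mathcal F_i^{in}\subseteq\{0,1,2,\ldots\}$ of input spike times. PSP kernel: $\epsilon(s)=2^{e^{in}_{min}}\cdot 2^{s}\cdot\mathbb 1(s\ge 0)$; total PSP $h_i(t)=\sum_{t^{in}\in\mathcal F_i^{in}}\epsilon(t-t^{in})$.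 With $\mathcal F^{out}\subseteq\mathbb Z$ the set of output spike times and $\eta$ the afterhyperpolarizing kernel, the membrane potential is $V_m(t)=\sum_{i\in\Gamma}w_i h_i(t)+\sum_{t^{out}\in\mathcal F^{out}}\eta(t-t^{out})\,\mathbb 1(t\ge t^{out})$ and the pre-reset membrane potential is $V_m^-(t)=V_m(t)-\eta(0)\,\mathbb 1(t\in\mathcal F^{out})$ (which depends only on output spikes at times $<t$). Output spikes are generated recursively in time: $t\in\mathcal F^{out}$ if and only if $V_m^-(t)\ge V_{th}$ (so no output spikes occur at negative times, where $V_m^-=0$). For a multi-spike EF neuron, the output spike at $t^{out}$ contributes $\eta(s)=-V_{th}\cdot 2^{s}$ (reset by subtraction); for a single-spike EF neuron it contributes $\eta(s)=-V_m^-(t^{out})\cdot 2^{s}$ (reset to zero). Logarithmic approximation and LTC, for integers $e_{min}\le e_{max}$ and real $a$: the multi-power LA is $\tilde a=0$ if $a<2^{e_{min}}$, $\tilde a=\lfloor a/2^{e_{min}}\rfloor 2^{e_{min}}$ if $2^{e_{min}}\le a<2^{e_{max}+1}$, $\tilde a=2^{e_{max}+1}-2^{e_{min}}$ if $a\ge 2^{e_{max}+1}$. The single-power LA is $\tilde a=0$ if $a<2^{e_{min}}$, $\tilde a=2^{\lfloor\log_2 a\rfloor}$ if $2^{e_{min}}\le a<2^{e_{max}+1}$, $\tilde a=2^{e_{max}}$ if $a\ge 2^{e_{max}+1}$. Writing $\tilde a=\sum_{e\in E}2^e$ with distinct $E\subseteq\{e_{min},\ldots,e_{max}\}$, the LTC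 spike train of $a$ is the set of spike times $\{e_{max}-e: e\in E\}\subseteq\{0,\ldots,e_{max}-e_{min}\}$; it is called multi-spike LTC when multi-power LA is used and single-spike LTC when single-power LA is used. *)

From Stdlib Require Import Reals ZArith List.
Open Scope R_scope.

Inductive ef_kind := MultiSpike | SingleSpike.

(* A synapse: (weight w_i, list of input spike times F_i^in). *)
Definition synapse := (R * list nat)%type.

Definition Twin (emin emax : Z) : nat := Z.to_nat (emax - emin + 1).

Definition eps (ein_min : Z) (t tin : nat) : R :=
  if (tin <=? t)%nat then powerRZ 2 ein_min * 2 ^ (t - tin) else 0.

Definition psp (ein_min : Z) (Fi : list nat) (t : nat) : R :=
  fold_right (fun tin acc => eps ein_min t tin + acc) 0 Fi.

Definition input_drive (ein_min : Z) (syn : list synapse) (t : nat) : R :=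
  fold_right (fun s acc => fst s * psp ein_min (snd s) t + acc) 0 syn.

Definition Vth (eout_max : Z) : R := powerRZ 2 eout_max.

(* eta(0) for an output spike whose pre-reset potential was v;
   eta(s) = eta_amp * 2^s. *)
Definition eta_amp (k : ef_kind) (eout_max : Z) (v : R) : R :=
  match k with MultiSpike => - Vth eout_max | SingleSpike => - v end.

(* Pre-reset potential at t given the history H of earlier output spikes
   (pairs (t_out, V_m^-(t_out)), all with t_out < t). *)
Definition vpre_from (k : ef_kind) (ein_min eout_max : Z) (syn : list synapse)
  (H : list (nat * R)) (t : nat) : R :=
  input_drive ein_min syn t +
  fold_right (fun p acc => eta_amp k eout_max (snd p) * 2 ^ (t - fst p) + acc) 0 H.

(* Output spikes at times < t (with their pre-reset potentials), generated
   recursively in time. Output spike times are nonnegative (V_m^- = 0 < V_th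
   at negative times). *)
Fixpoint out_hist (k : ef_kind) (ein_min eout_max : Z) (syn : list synapse)
  (t : nat) : list (nat * R) :=
  match t with
  | O => nil
  | S t' =>
      let H := out_hist k ein_min eout_max syn t' in
      let v := vpre_from k ein_min eout_max syn H t' in
      if Rle_dec (Vth eout_max) v then H ++ (t', v) :: nil else H
  end.

Definition Vpre (k : ef_kind) (ein_min eout_max : Z) (syn : list synapse) (t : nat) : R :=
  vpre_from k ein_min eout_max syn (out_hist k ein_min eout_max syn t) t.

Definition fires (k : ef_kind) (ein_min eout_max : Z) (syn : list synapse) (t : nat) : Prop :=
  Vth eout_max <= Vpre k ein_min eout_max syn t.

Definition floorR (x : R) : Z := (up x - 1)%Z.

Definition multi_LA (emin emax : Z) (a : R) : R :=
  if Rlt_dec a (powerRZ 2 emin) then 0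
  else if Rlt_dec a (powerRZ 2 (emax + 1)) then
    IZR (floorR (a / powerRZ 2 emin)) * powerRZ 2 emin
  else powerRZ 2 (emax + 1) - powerRZ 2 emin.

Definition single_LA (emin emax : Z) (a : R) : R :=
  if Rlt_dec a (powerRZ 2 emin) then 0
  else if Rlt_dec a (powerRZ 2 (emax + 1)) then
    powerRZ 2 (floorR (ln a / ln 2))
  else powerRZ 2 emax.

Definition LA (k : ef_kind) (emin emax : Z) (a : R) : R :=
  match k with MultiSpike => multi_LA emin emax a | SingleSpike => single_LA emin emax a end.

(* S is the LTC spike train of a: S = {emax - e : e in E} where E is a set of
   distinct exponents in {emin..emax} with LA(a) = sum_{e in E} 2^e. *)
Definition is_LTC (k : ef_kind) (emin emax : Z) (a : R) (S : list nat) : Prop :=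
  NoDup S /\
  (forall s, In s S -> (Z.of_nat s <= emax - emin)%Z) /\
  LA k emin emax a = fold_right (fun s acc => powerRZ 2 (emax - Z.of_nat s) + acc) 0 S.

(* After the input window closes, the input drive and every afterhyperpolarization
   term double at each step, so v(s) := V_m^-(T^in - 1 + s) obeys
   v(s+1) = 2 (v(s) - reset(s)), the reset being V_th (multi-spike) or v(s)
   (single-spike) when the neuron fires at s.  With reset by subtraction this is
   binary long division of v(0) by V_th = 2^e_max: the neuron fires at s exactly
   when the digit of weight 2^(e_max - s) of v(0) is one, and the expansion
   truncated at weight 2^e_min is the multi-power approximation.  With reset to
   zero the neuron fires once, at the first s with 2^s v(0) >= V_th, that is
   s = e_max - floor(log2 v(0)), the exponent of the single-power approximation.
   Binary expansions being unique, every LTC train of v(0) is this pattern. *)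

From Stdlib Require Import Reals ZArith List Lia Lra.
Open Scope R_scope.

Fixpoint digit_sum (f : nat -> bool) (g : nat -> R) (s n : nat) : R :=
  match n with
  | O => 0
  | S n' => (if f s then g s else 0) + digit_sum f g (S s) n'
  end.

Lemma digit_sum_ext f f' g s n :
  (forall j, (s <= j < s + n)%nat -> f j = f' j) ->
  digit_sum f g s n = digit_sum f' g s n.
Proof.
  revert s; induction n as [|n IH]; intros s Hf; simpl; auto.
  rewrite (Hf s) by lia; rewrite (IH (S s)); auto.
  intros j Hj; apply Hf; lia.
Qed.

Lemma digit_sum_false g s n : digit_sum (fun _ => false) g s n = 0.
Proof. revert s; induction n as [|n IH]; intros; simpl; rewrite ?IH; ring. Qed.

Lemma digit_sum_nonneg f g s n : (forall j, 0 <= g j) -> 0 <= digit_sum f g s n.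
Proof.
  intros Hg; revert s; induction n as [|n IH]; intros s; simpl; [lra|].
  specialize (IH (S s)); specialize (Hg s); destruct (f s); lra.
Qed.

Lemma digit_sum_snoc f g s n :
  digit_sum f g s (S n) = digit_sum f g s n + (if f (s + n)%nat then g (s + n)%nat else 0).
Proof.
  revert s; induction n as [|n IH]; intros s.
  - simpl; rewrite Nat.add_0_r; ring.
  - change (digit_sum f g s (S (S n)))
      with ((if f s then g s else 0) + digit_sum f g (S s) (S n)).
    rewrite IH, Nat.add_succ_comm; simpl; ring.
Qed.

Lemma digit_sum_set_bit f g a s n :
  f a = false -> (s <= a < s + n)%nat ->
  digit_sum (fun j => f j || Nat.eqb j a)%bool g s n = digit_sum f g s n + g a.
Proof.
  revert s; induction n as [|n IH]; intros s Ha Hr; simpl; [lia|].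
  destruct (Nat.eqb_spec s a) as [->|Hne].
  - rewrite Ha, (digit_sum_ext _ f); [simpl; ring|].
    intros j Hj; destruct (Nat.eqb_spec j a); [lia|apply Bool.orb_false_r].
  - rewrite IH, Bool.orb_false_r by (auto; lia); ring.
Qed.

Lemma digit_sum_delta g a s n :
  (s <= a < s + n)%nat -> digit_sum (fun j => Nat.eqb j a) g s n = g a.
Proof.
  intros Hr.
  rewrite (digit_sum_ext _ (fun j => (fun _ => false) j || Nat.eqb j a)%bool) by reflexivity.
  rewrite digit_sum_set_bit, digit_sum_false by auto; ring.
Qed.

Definition inb (L : list nat) (j : nat) : bool :=
  if in_dec Nat.eq_dec j L then true else false.

Lemma inb_cons a L j : inb (a :: L) j = (inb L j || Nat.eqb j a)%bool.
Proof.
  unfold inb; simpl.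
  destruct (in_dec Nat.eq_dec j L), (Nat.eqb_spec j a), (Nat.eq_dec a j);
    simpl; auto; try tauto; congruence.
Qed.

Lemma fold_sum_digit_sum g L s n :
  NoDup L -> (forall j, In j L -> (s <= j < s + n)%nat) ->
  fold_right (fun j acc => g j + acc) 0 L = digit_sum (inb L) g s n.
Proof.
  induction L as [|a L IH]; intros Hnd Hr; simpl.
  - rewrite (digit_sum_ext _ (fun _ => false)), digit_sum_false; auto.
  - inversion_clear Hnd as [|? ? Ha Hnd'].
    rewrite (digit_sum_ext _ (fun j => inb L j || Nat.eqb j a)%bool)
      by (intros; apply inb_cons).
    rewrite digit_sum_set_bit, IH; auto with datatypes.
    + ring.
    + unfold inb; destruct in_dec; tauto.
Qed.

Section HalvingWeights.

Variable g : nat -> R.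
Hypothesis g_half : forall j, g (S j) * 2 = g j.
Hypothesis g_pos : forall j, 0 < g j.

Lemma digit_sum_true s n :
  digit_sum (fun _ => true) g s n + 2 * g (s + n)%nat = 2 * g s.
Proof.
  revert s; induction n as [|n IH]; intros s; simpl.
  - rewrite Nat.add_0_r; ring.
  - specialize (IH (S s)); specialize (g_half s).
    rewrite Nat.add_succ_r; simpl in IH; lra.
Qed.

Lemma digit_sum_le_geometric f s n :
  digit_sum f g s n + 2 * g (s + n)%nat <= 2 * g s.
Proof.
  revert s; induction n as [|n IH]; intros s; simpl.
  - rewrite Nat.add_0_r; lra.
  - specialize (IH (S s)); specialize (g_half s); specialize (g_pos s).
    rewrite Nat.add_succ_r; simpl in IH; destruct (f s); lra.
Qed.

Lemma digit_sum_head_iff f s n r :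
  0 <= r < g (s + n)%nat -> (g s <= digit_sum f g s (S n) + r <-> f s = true).
Proof.
  intros Hr; simpl.
  pose proof (digit_sum_le_geometric f (S s) n) as Htail.
  pose proof (digit_sum_nonneg f g (S s) n (fun j => Rlt_le _ _ (g_pos j))).
  rewrite Nat.add_succ_l in Htail.
  pose proof (g_half (s + n)%nat); pose proof (g_half s); pose proof (g_pos s).
  destruct (f s); split; intros; auto; try lra; discriminate.
Qed.

Lemma digit_sum_head_eq f f' s n :
  digit_sum f g s (S n) = digit_sum f' g s (S n) -> f s = f' s.
Proof.
  intros Heq; apply Bool.eq_iff_eq_true.
  pose proof (g_pos (s + n)%nat).
  rewrite <- (digit_sum_head_iff f s n 0), <- (digit_sum_head_iff f' s n 0), Heq
    by lra; tauto.
Qed.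

Lemma digit_sum_inj f f' s n :
  digit_sum f g s (S n) = digit_sum f' g s (S n) ->
  forall j, (s <= j <= s + n)%nat -> f j = f' j.
Proof.
  revert s; induction n as [|n IH]; intros s Heq j Hj;
    pose proof (digit_sum_head_eq f f' s _ Heq) as Hhead.
  - replace j with s by lia; auto.
  - destruct (Nat.eq_dec j s) as [->|Hne]; auto.
    apply (IH (S s)); [|lia].
    change (digit_sum ?h g s (S (S n)))
      with ((if h s then g s else 0) + digit_sum h g (S s) (S n)) in Heq.
    rewrite Hhead in Heq; lra.
Qed.

Lemma greedy_digits v0 :
  0 <= v0 < 2 * g 0%nat ->
  forall n, exists f r, v0 = digit_sum f g 0 n + r /\ 0 <= r < 2 * g n.
Proof.
  intros Hv0 n; induction n as [|n [f [r [Hsum Hr]]]].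
  - exists (fun _ => false), v0; simpl; lra.
  - set (b := if Rle_dec (g n) r then true else false).
    exists (fun j => if Nat.eqb j n then b else f j), (if b then r - g n else r).
    rewrite digit_sum_snoc, (digit_sum_ext _ f), Nat.eqb_refl.
    + pose proof (g_half n); unfold b; destruct Rle_dec; simpl; split; lra.
    + intros j Hj; destruct (Nat.eqb_spec j n); [lia|auto].
Qed.

Section LongDivision.

Variables (W : R) (v : nat -> R).
Hypothesis v_step : forall s, v (S s) = 2 * (v s - if Rle_dec W (v s) then W else 0).

(* [c] plays the role of [2 ^ s]: [v s / c] is the part of the expansion of
   [v 0] not yet emitted. *)
Lemma long_division_digits f r n :
  forall s c, 0 < c -> c * g s = W -> 0 <= r < g (s + n)%nat ->
  v s = c * (digit_sum f g s (S n) + r) ->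
  forall j, (j <= n)%nat -> (W <= v (s + j)%nat <-> f (s + j)%nat = true).
Proof.
  induction n as [|n IH]; intros s c Hc HW Hr Hv j Hj;
    assert (Hnow : W <= v s <-> f s = true) by
      (rewrite <- (digit_sum_head_iff f s _ r Hr), Hv, <- HW;
       split; intros; [apply (Rmult_le_reg_l c) | apply Rmult_le_compat_l]; lra).
  - replace j with 0%nat by lia; rewrite Nat.add_0_r; exact Hnow.
  - destruct j as [|j]; [rewrite Nat.add_0_r; exact Hnow|].
    rewrite Nat.add_succ_r, <- Nat.add_succ_l.
    apply (IH (S s) (2 * c)); try lia.
    + lra.
    + rewrite <- HW, <- (g_half s); ring.
    + rewrite Nat.add_succ_l, <- Nat.add_succ_r; exact Hr.
    + rewrite v_step.
      destruct Rle_dec as [Hle|Hlt]; rewrite Hv; cbn [digit_sum].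
      * rewrite (proj1 Hnow Hle), <- HW; ring.
      * destruct (f s) eqn:Hfs; [exfalso; apply Hlt, Hnow; auto | ring].
Qed.

End LongDivision.

End HalvingWeights.

Lemma p2_pos a : 0 < powerRZ 2 a.
Proof. apply powerRZ_lt; lra. Qed.

Lemma p2_succ a : powerRZ 2 (a + 1) = 2 * powerRZ 2 a.
Proof. rewrite powerRZ_add by lra; simpl; ring. Qed.

Lemma p2_nat (n : nat) : powerRZ 2 (Z.of_nat n) = 2 ^ n.
Proof. rewrite pow_powerRZ; auto. Qed.

Lemma p2_le a b : (a <= b)%Z -> powerRZ 2 a <= powerRZ 2 b.
Proof.
  intros Hab; replace b with (a + Z.of_nat (Z.to_nat (b - a)))%Z by lia.
  rewrite powerRZ_add, p2_nat by lra.
  pose proof (p2_pos a); pose proof (pow_R1_Rle 2 (Z.to_nat (b - a))); nra.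
Qed.

Lemma p2_lt_cancel a b : powerRZ 2 a < powerRZ 2 b -> (a < b)%Z.
Proof. intros H; apply Z.nle_gt; intros Hba; pose proof (p2_le b a Hba); lra. Qed.

Lemma p2_exp z : powerRZ 2 z = exp (IZR z * ln 2).
Proof. apply powerRZ_Rpower; lra. Qed.

Lemma floorR_spec y : IZR (floorR y) <= y < IZR (floorR y) + 1.
Proof. unfold floorR; rewrite minus_IZR; pose proof (archimed y); simpl; lra. Qed.

Lemma floorR_unique (N : Z) y : 0 <= y < 1 -> floorR (IZR N + y) = N.
Proof.
  intros Hy; unfold floorR.
  rewrite <- (tech_up (IZR N + y) (N + 1)); rewrite ?plus_IZR; simpl; lia || lra.
Qed.

Lemma floor_log2_spec v :
  0 < v ->
  powerRZ 2 (floorR (ln v / ln 2)) <= v < powerRZ 2 (floorR (ln v / ln 2) + 1).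
Proof.
  intros Hv; pose proof ln_lt_2 as Hln2.
  set (y := ln v / ln 2).
  pose proof (floorR_spec y) as [Hlo Hhi].
  replace v with (exp (y * ln 2))
    by (unfold y, Rdiv; rewrite Rmult_assoc, Rinv_l, Rmult_1_r, exp_ln; lra).
  rewrite !p2_exp, plus_IZR; simpl; split.
  - destruct (Rle_lt_or_eq_dec _ _ Hlo) as [Hlt|Heq]; [|rewrite Heq; lra].
    left; apply exp_increasing, Rmult_lt_compat_r; lra.
  - apply exp_increasing, Rmult_lt_compat_r; lra.
Qed.

Definition bit_weight (E : Z) (j : nat) : R := powerRZ 2 (E - Z.of_nat j).

Lemma bit_weight_half E j : bit_weight E (S j) * 2 = bit_weight E j.
Proof.
  unfold bit_weight; rewrite Rmult_comm, <- p2_succ; f_equal; lia.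
Qed.

Lemma bit_weight_pos E j : 0 < bit_weight E j.
Proof. apply p2_pos. Qed.

Lemma bit_weight_first E : bit_weight E 0 = powerRZ 2 E.
Proof. unfold bit_weight; f_equal; lia. Qed.

Lemma bit_weight_last em E m :
  Z.of_nat m = (E - em)%Z -> bit_weight E m = powerRZ 2 em.
Proof. intros Hm; unfold bit_weight; f_equal; lia. Qed.

Lemma digit_sum_multiple f E em s n :
  (em <= E)%Z -> (s + n <= S (Z.to_nat (E - em)))%nat ->
  exists N : Z, digit_sum f (bit_weight E) s n = IZR N * powerRZ 2 em.
Proof.
  intros HE; revert s; induction n as [|n IH]; intros s Hs; simpl.
  - exists 0%Z; simpl; ring.
  - destruct (IH (S s)) as [N HN]; [lia|]; rewrite HN.
    set (d := Z.to_nat (E - Z.of_nat s - em)).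
    exists ((if f s then 2 ^ Z.of_nat d else 0) + N)%Z.
    rewrite plus_IZR; destruct (f s); [|simpl; ring].
    unfold bit_weight.
    replace (E - Z.of_nat s)%Z with (Z.of_nat d + em)%Z by (unfold d; lia).
    rewrite powerRZ_add, p2_nat, pow_IZR by lra; ring.
Qed.

Lemma multi_LA_digits em E (N : Z) r :
  (0 <= N)%Z -> 0 <= r < powerRZ 2 em ->
  IZR N * powerRZ 2 em + r < powerRZ 2 (E + 1) ->
  multi_LA em E (IZR N * powerRZ 2 em + r) = IZR N * powerRZ 2 em.
Proof.
  intros HN Hr Hx; pose proof (p2_pos em) as Hp; unfold multi_LA.
  destruct Rlt_dec as [Hlo|_]; [|destruct Rlt_dec; [|lra]].
  - assert (HN0 : N = 0%Z); [|rewrite HN0; simpl; ring].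
    assert (HN1 : IZR N < IZR 1) by (simpl; nra); apply lt_IZR in HN1; lia.
  - replace ((IZR N * powerRZ 2 em + r) / powerRZ 2 em) with (IZR N + r / powerRZ 2 em)
      by (field; lra).
    rewrite floorR_unique; auto.
    split; [apply Rmult_le_pos; [lra|apply Rlt_le, Rinv_0_lt_compat; lra]|].
    apply (Rmult_lt_reg_r (powerRZ 2 em)); auto; field_simplify; lra.
Qed.

Lemma multi_spike_digits em E m (v : nat -> R) :
  (em <= E)%Z -> Z.of_nat m = (E - em)%Z -> 0 <= v 0%nat ->
  (forall s, v (S s) = 2 * (v s - if Rle_dec (Vth E) (v s) then Vth E else 0)) ->
  exists f, (forall s, (s <= m)%nat -> (Vth E <= v s <-> f s = true)) /\
    multi_LA em E (v 0%nat) = digit_sum f (bit_weight E) 0 (S m).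
Proof.
  intros HE Hm Hv0 Hstep.
  pose proof (bit_weight_first E) as Hfirst.
  pose proof (bit_weight_last em E m Hm) as Hlast.
  pose proof (bit_weight_half E m) as Hhalf.
  pose proof (p2_pos E); pose proof (p2_pos em).
  destruct (Rlt_dec (v 0%nat) (powerRZ 2 (E + 1))) as [Hlt|Hge].
  - destruct (greedy_digits _ (bit_weight_half E) (v 0%nat))
      with (n := S m) as [f [r [Hsum Hr]]].
    { rewrite Hfirst, <- p2_succ; lra. }
    exists f; split.
    + intros s Hs.
      apply (long_division_digits _ (bit_weight_half E) (bit_weight_pos E)
               (Vth E) v Hstep f r m 0 1); simpl; auto; try lra.
      * rewrite Hfirst; unfold Vth; ring.
      * rewrite Hsum; simpl; ring.
    + destruct (digit_sum_multiple f E em 0 (S m) HE) as [N HN]; [lia|].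
      pose proof (digit_sum_nonneg f _ 0 (S m) (fun j => Rlt_le _ _ (bit_weight_pos E j))).
      assert (HN0 : (0 <= N)%Z).
      { apply le_IZR; simpl; rewrite HN in *; nra. }
      rewrite Hsum, HN, multi_LA_digits; auto; lra.
  - exists (fun _ => true); split.
    + assert (Habove : forall s, 2 * Vth E <= v s).
      { induction s as [|s IH].
        - unfold Vth; rewrite <- p2_succ; lra.
        - rewrite Hstep; destruct Rle_dec; unfold Vth in *; lra. }
      intros s _; specialize (Habove s); unfold Vth in *; split; auto; lra.
    + pose proof (digit_sum_true _ (bit_weight_half E) 0 (S m)) as Hall.
      pose proof (p2_le em (E + 1) ltac:(lia)).
      rewrite Nat.add_0_l in Hall; unfold multi_LA.
      destruct Rlt_dec; [lra|]; destruct Rlt_dec; [lra|].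
      rewrite p2_succ; lra.
Qed.

Lemma scaled_below v0 a E s :
  v0 < powerRZ 2 a -> (Z.of_nat s + a <= E)%Z -> 2 ^ s * v0 < powerRZ 2 E.
Proof.
  intros Hv Hs; pose proof (pow_lt 2 s ltac:(lra)).
  apply Rlt_le_trans with (2 ^ s * powerRZ 2 a); [nra|].
  rewrite <- p2_nat, <- powerRZ_add by lra; apply p2_le; lia.
Qed.

Lemma scaled_above v0 a E s :
  powerRZ 2 a <= v0 -> (E <= Z.of_nat s + a)%Z -> powerRZ 2 E <= 2 ^ s * v0.
Proof.
  intros Hv Hs; pose proof (pow_lt 2 s ltac:(lra)).
  apply Rle_trans with (2 ^ s * powerRZ 2 a); [|nra].
  rewrite <- p2_nat, <- powerRZ_add by lra; apply p2_le; lia.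
Qed.

Section FirstCrossing.

Variables (W : R) (v : nat -> R).
Hypothesis W_pos : 0 < W.
Hypothesis v_step : forall s, v (S s) = if Rle_dec W (v s) then 0 else 2 * v s.

Lemma orbit_before_crossing s :
  (forall s', (s' < s)%nat -> 2 ^ s' * v 0%nat < W) -> v s = 2 ^ s * v 0%nat.
Proof.
  induction s as [|s IH]; intros Hbelow; [simpl; ring|].
  rewrite v_step, IH by (intros; apply Hbelow; lia).
  destruct Rle_dec as [Hle|_]; [specialize (Hbelow s (Nat.lt_succ_diag_r s)); lra | simpl; ring].
Qed.

Lemma orbit_after_crossing s : W <= v s -> forall j, (s < j)%nat -> v j = 0.
Proof.
  intros Hs j Hj; induction Hj as [|j Hj IH].
  - rewrite v_step; destruct Rle_dec; [auto|contradiction].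
  - rewrite v_step, IH; destruct Rle_dec; lra.
Qed.

Lemma first_crossing_iff s0 :
  W <= 2 ^ s0 * v 0%nat -> (forall s', (s' < s0)%nat -> 2 ^ s' * v 0%nat < W) ->
  forall s, W <= v s <-> s = s0.
Proof.
  intros Hcross Hbelow s.
  assert (Hs0 : W <= v s0) by (rewrite orbit_before_crossing; auto).
  destruct (Nat.lt_trichotomy s s0) as [Hlt|[->|Hgt]]; [| tauto |].
  - rewrite orbit_before_crossing by (intros; apply Hbelow; lia).
    specialize (Hbelow s Hlt); split; intros; [lra|lia].
  - rewrite (orbit_after_crossing s0 Hs0 s Hgt); split; intros; [lra|lia].
Qed.

Lemma no_crossing m :
  (forall s, (s <= m)%nat -> 2 ^ s * v 0%nat < W) ->
  forall s, (s <= m)%nat -> ~ W <= v s.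
Proof.
  intros Hbelow s Hs; rewrite orbit_before_crossing by (intros; apply Hbelow; lia).
  specialize (Hbelow s Hs); lra.
Qed.

End FirstCrossing.

Lemma single_spike_digits em E m (v : nat -> R) :
  (em <= E)%Z -> Z.of_nat m = (E - em)%Z -> 0 <= v 0%nat ->
  (forall s, v (S s) = if Rle_dec (Vth E) (v s) then 0 else 2 * v s) ->
  exists f, (forall s, (s <= m)%nat -> (Vth E <= v s <-> f s = true)) /\
    single_LA em E (v 0%nat) = digit_sum f (bit_weight E) 0 (S m).
Proof.
  intros HE Hm Hv0 Hstep.
  assert (HW : 0 < Vth E) by apply p2_pos.
  unfold single_LA.
  destruct (Rlt_dec (v 0%nat) (powerRZ 2 em)) as [Hlo|Hlo];
    [|destruct (Rlt_dec (v 0%nat) (powerRZ 2 (E + 1))) as [Hhi|Hhi]].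
  - exists (fun _ => false); rewrite digit_sum_false; split; auto.
    intros s Hs; split; [|discriminate]; intros Hfire; exfalso; revert Hfire.
    apply (no_crossing _ _ Hstep m); auto.
    intros s' Hs'; apply (scaled_below _ em); auto; lia.
  - set (e := floorR (ln (v 0%nat) / ln 2)).
    destruct (floor_log2_spec (v 0%nat)) as [Hle Hlt]; [pose proof (p2_pos em); lra|].
    fold e in Hle, Hlt.
    assert (Hem : (em < e + 1)%Z) by (apply p2_lt_cancel; lra).
    assert (HeE : (e < E + 1)%Z) by (apply p2_lt_cancel; lra).
    set (s0 := Z.to_nat (E - e)).
    exists (fun j => Nat.eqb j s0); split.
    + intros s Hs; rewrite Nat.eqb_eq.
      apply (first_crossing_iff _ _ HW Hstep s0).
      * apply (scaled_above _ e); auto; unfold s0; lia.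
      * intros s' Hs'; apply (scaled_below _ (e + 1)); auto; unfold s0 in Hs'; lia.
    + rewrite digit_sum_delta by (unfold s0; lia).
      unfold bit_weight; f_equal; unfold s0; lia.
  - exists (fun j => Nat.eqb j 0); split.
    + intros s Hs; rewrite Nat.eqb_eq.
      apply (first_crossing_iff _ _ HW Hstep 0); [|intros; lia].
      apply (scaled_above _ (E + 1)); [lra|lia].
    + rewrite digit_sum_delta, bit_weight_first by lia; reflexivity.
Qed.

Lemma inb_spec L j : inb L j = true <-> In j L.
Proof. unfold inb; destruct in_dec; split; auto; discriminate. Qed.

Lemma LTC_of_digits k em E x m f :
  Z.of_nat m = (E - em)%Z -> LA k em E x = digit_sum f (bit_weight E) 0 (S m) ->
  is_LTC k em E x (filter f (seq 0 (S m))).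
Proof.
  intros Hm HLA.
  assert (Hrange : forall j, In j (filter f (seq 0 (S m))) -> (0 <= j < 0 + S m)%nat).
  { intros j Hj; apply filter_In, proj1, in_seq in Hj; exact Hj. }
  split; [|split].
  - apply NoDup_filter, seq_NoDup.
  - intros s Hs; apply Hrange in Hs; lia.
  - rewrite HLA; apply eq_sym.
    rewrite (fold_sum_digit_sum (bit_weight E) _ 0 (S m))
      by (apply NoDup_filter, seq_NoDup || exact Hrange).
    apply digit_sum_ext; intros j Hj.
    apply Bool.eq_iff_eq_true; rewrite inb_spec, filter_In, in_seq; tauto.
Qed.

Lemma is_LTC_unique k em E x L L' :
  (em <= E)%Z -> is_LTC k em E x L -> is_LTC k em E x L' ->
  forall s, In s L <-> In s L'.
Proof.
  intros HE [Hnd [Hb Hsum]] [Hnd' [Hb' Hsum']].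
  set (m := Z.to_nat (E - em)).
  assert (Hdigits : forall T, NoDup T -> (forall s, In s T -> (Z.of_nat s <= E - em)%Z) ->
            fold_right (fun s acc => powerRZ 2 (E - Z.of_nat s) + acc) 0 T =
            digit_sum (inb T) (bit_weight E) 0 (S m)).
  { intros T HT HbT; apply (fold_sum_digit_sum (bit_weight E)); auto.
    intros j Hj; apply HbT in Hj; unfold m; lia. }
  assert (Hsame : forall j, (j <= m)%nat -> inb L j = inb L' j).
  { intros j Hj; apply (digit_sum_inj _ (bit_weight_half E) (bit_weight_pos E) _ _ 0 m);
      [|lia].
    rewrite <- Hdigits, <- Hdigits, <- Hsum, <- Hsum'; auto. }
  intros s; rewrite <- !inb_spec; split; intros Hin.
  - rewrite <- Hsame; auto; apply inb_spec, Hb in Hin; unfold m; lia.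
  - rewrite Hsame; auto; apply inb_spec, Hb' in Hin; unfold m; lia.
Qed.

Lemma firing_LTC k em E m (v : nat -> R) :
  (em <= E)%Z -> Z.of_nat m = (E - em)%Z ->
  (forall s, v (S s) =
     2 * (v s + if Rle_dec (Vth E) (v s) then eta_amp k E (v s) else 0)) ->
  exists L, is_LTC k em E (Rmax (v 0%nat) 0) L /\
    forall s, (s <= m)%nat -> (Vth E <= v s <-> In s L).
Proof.
  intros HE Hm Hstep.
  assert (HW : 0 < Vth E) by apply p2_pos.
  destruct (Rle_dec 0 (v 0%nat)) as [Hv0|Hv0].
  - rewrite Rmax_left by lra.
    assert (Hdigits : exists f, (forall s, (s <= m)%nat -> (Vth E <= v s <-> f s = true)) /\
              LA k em E (v 0%nat) = digit_sum f (bit_weight E) 0 (S m)).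
    { destruct k; [apply multi_spike_digits | apply single_spike_digits]; auto;
        intros s; rewrite Hstep; simpl; destruct Rle_dec; ring. }
    destruct Hdigits as [f [Hfire HLA]].
    exists (filter f (seq 0 (S m))); split; [apply (LTC_of_digits _ _ _ _ _ _ Hm HLA)|].
    intros s Hs; rewrite Hfire, filter_In, in_seq by auto; split; [split; auto; lia|tauto].
  - rewrite Rmax_right by lra.
    assert (Hneg : forall s, v s <= 0).
    { induction s as [|s IH]; [lra|]; rewrite Hstep; destruct Rle_dec; lra. }
    exists nil; split.
    + split; [constructor|split; [intros s []|]].
      pose proof (p2_pos em).
      destruct k; simpl; unfold multi_LA, single_LA; destruct Rlt_dec; auto; lra.
    + intros s _; specialize (Hneg s); simpl; split; [lra|tauto].
Qed.

Lemma eps_succ e t tin : (tin <= t)%nat -> eps e (S t) tin = 2 * eps e t tin.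
Proof.
  intros Ht; unfold eps.
  rewrite (proj2 (Nat.leb_le tin t)), (proj2 (Nat.leb_le tin (S t))) by lia.
  rewrite Nat.sub_succ_l by auto; simpl; ring.
Qed.

Lemma psp_succ e Fi t :
  (forall tin, In tin Fi -> (tin <= t)%nat) -> psp e Fi (S t) = 2 * psp e Fi t.
Proof.
  induction Fi as [|tin Fi IH]; intros Hin; unfold psp in *; simpl; [ring|].
  rewrite eps_succ, IH by (intros; apply Hin; simpl; auto); ring.
Qed.

Lemma input_drive_succ e syn t :
  (forall w Fi tin, In (w, Fi) syn -> In tin Fi -> (tin <= t)%nat) ->
  input_drive e syn (S t) = 2 * input_drive e syn t.
Proof.
  induction syn as [|[w Fi] syn IH]; intros Hin; unfold input_drive in *; simpl; [ring|].
  rewrite psp_succ, IH by (intros; eapply Hin; simpl; eauto); ring.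
Qed.

Lemma out_hist_before k e E syn t p : In p (out_hist k e E syn t) -> (fst p < t)%nat.
Proof.
  revert p; induction t as [|t IH]; simpl; intros p Hp; [contradiction|].
  destruct Rle_dec; [apply in_app_or in Hp; destruct Hp as [Hp|[<-|[]]]|];
    try (apply IH in Hp); simpl; lia.
Qed.

Lemma fold_right_sum_init (A : Type) (g : A -> R) c l :
  fold_right (fun a acc => g a + acc) c l = fold_right (fun a acc => g a + acc) 0 l + c.
Proof. induction l as [|a l IH]; simpl; [|rewrite IH]; ring. Qed.

Lemma ahp_succ k E (H : list (nat * R)) t :
  (forall p, In p H -> (fst p <= t)%nat) ->
  fold_right (fun p acc => eta_amp k E (snd p) * 2 ^ (S t - fst p) + acc) 0 H =
  2 * fold_right (fun p acc => eta_amp k E (snd p) * 2 ^ (t - fst p) + acc) 0 H.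
Proof.
  induction H as [|p H IH]; intros Hb; cbn [fold_right]; [ring|].
  rewrite IH, Nat.sub_succ_l by (intros; apply Hb; simpl; auto); simpl; ring.
Qed.

Lemma Vpre_succ k e E syn t :
  (forall w Fi tin, In (w, Fi) syn -> In tin Fi -> (tin <= t)%nat) ->
  Vpre k e E syn (S t) =
  2 * (Vpre k e E syn t +
       if Rle_dec (Vth E) (Vpre k e E syn t) then eta_amp k E (Vpre k e E syn t) else 0).
Proof.
  intros Hin; unfold Vpre at 1; simpl out_hist; fold (Vpre k e E syn t).
  assert (Hb : forall p, In p (out_hist k e E syn t) -> (fst p <= t)%nat)
    by (intros p Hp; apply out_hist_before in Hp; lia).
  unfold Vpre, vpre_from; rewrite input_drive_succ by auto.
  destruct Rle_dec.
  - rewrite fold_right_app, fold_right_sum_init, ahp_succ by auto.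
    cbn [fold_right fst snd]; rewrite Nat.sub_succ_l, Nat.sub_diag by lia; simpl; ring.
  - rewrite ahp_succ by auto; ring.
Qed.

Theorem lemma2 (k : ef_kind) (ein_min ein_max eout_min eout_max : Z)
  (syn : list synapse) :
  (ein_min <= ein_max)%Z ->
  (eout_min <= eout_max)%Z ->
  (forall w Fi, In (w, Fi) syn -> NoDup Fi) ->
  (forall w Fi tin, In (w, Fi) syn -> In tin Fi -> (tin < Twin ein_min ein_max)%nat) ->
  let Tin := Twin ein_min ein_max in
  let Tout := Twin eout_min eout_max in
  let x := Rmax (Vpre k ein_min eout_max syn (Tin - 1)) 0 in
  (exists S, is_LTC k eout_min eout_max x S) /\
  (forall S, is_LTC k eout_min eout_max x S ->
     forall t : nat,
       ((Tin - 1 <= t <= Tin + Tout - 2)%nat /\ fires k ein_min eout_max syn t) <->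
       (exists s, In s S /\ t = (Tin - 1 + s)%nat)).
Proof.
  intros Hin Hout _ Hwindow; cbv zeta.
  set (m := Z.to_nat (eout_max - eout_min)).
  assert (Hm : Z.of_nat m = (eout_max - eout_min)%Z) by (unfold m; lia).
  assert (HTin : (1 <= Twin ein_min ein_max)%nat) by (unfold Twin; lia).
  replace (Twin ein_min ein_max + Twin eout_min eout_max - 2)%nat
    with (Twin ein_min ein_max - 1 + m)%nat by (unfold Twin, m; lia).
  set (n0 := (Twin ein_min ein_max - 1)%nat) in *.
  set (v := fun s => Vpre k ein_min eout_max syn (n0 + s)).
  destruct (firing_LTC k eout_min eout_max m v Hout Hm) as [L0 [HL0 Hfire]].
  { intros s; unfold v; rewrite Nat.add_succ_r; apply Vpre_succ.
    intros w Fi tin Hsyn Htin; specialize (Hwindow w Fi tin Hsyn Htin); lia. }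
  replace (Vpre k ein_min eout_max syn n0) with (v 0%nat) by (unfold v; f_equal; lia).
  split; [exists L0; exact HL0|].
  intros L HL t; pose proof (is_LTC_unique _ _ _ _ _ _ Hout HL HL0) as Hsame.
  split.
  - intros [Ht Hf]; exists (t - n0)%nat; split; [|lia].
    apply Hsame, Hfire; [lia|]; unfold v; replace (n0 + (t - n0))%nat with t by lia; auto.
  - intros [s [Hs ->]]; destruct HL as [_ [Hb _]]; specialize (Hb s Hs).
    split; [lia|]; apply (Hfire s); [lia|]; apply Hsame; auto.
Qed.
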